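(* Let $\Gamma$ be a set of clauses with designated blocking variables. If $C\lor\ell$ is cost-BC with respect to $\Gamma$ and the literal $\ell$, then $\mathrm{cost}(\Gamma)=\mathrm{cost}(\Gamma\cup\{C\lor\ell\})$.
   Context: For a CNF $\Gamma$ with designated blocking variables $b_1,\dots,b_m$: for a total assignment $\alpha$, $\mathrm{cost}(\alpha)=\sum_i\alpha(b_i)$, and $\mathrm{cost}(\Gamma)=\min\{\mathrm{cost}(\alpha):\alpha\text{ total},\ \alpha\models\Gamma\}$. A clause $C\lor\ell$ is cost-BC w.r.t. $\Gamma$ and the literal $\ell$ if for every clause of the form $D\lor\lnot\ell$ in $\Gamma$, $C\lor D$ is a tautology, and $\ell$ is not a blocking variable with positive polarity. *)

From mathcomp Require Import all_boot.
Set Implicit Arguments. Unset Strict Implicit. Unset Printing Implicit Defensive.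

Section CNF.
Variable V : finType.

(* A literal is a variable with a polarity (true = positive). *)
Definition lit := (V * bool)%type.
Definition negl (l : lit) : lit := (l.1, ~~ l.2).
Definition clause := seq lit.
Definition cnf := seq clause.

Definition assignment := {ffun V -> bool}.
Definition lit_val (a : assignment) (l : lit) : bool := a l.1 == l.2.
Definition sat_clause (a : assignment) (c : clause) : bool := has (lit_val a) c.
Definition sat (a : assignment) (G : cnf) : bool := all (sat_clause a) G.

Definition cost_asg (B : {set V}) (a : assignment) : nat :=
  \sum_(b in B) nat_of_bool (a b).

(* cost(Gamma) = min over satisfying total assignments; None = +infinity
   (Gamma unsatisfiable, min of the empty set). *)
Definition cost (B : {set V}) (G : cnf) : option nat :=
  if [pick a : assignment | sat a G] is Some a0 then
    Some (\big[minn/cost_asg B a0]_(a : assignment | sat a G) cost_asg B a)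
  else None.

Definition tautology (c : clause) : bool := has (fun l => negl l \in c) c.

Definition cost_BC (B : {set V}) (G : cnf) (C : clause) (l : lit) : Prop :=
  (forall E, E \in G -> negl l \in E ->
     tautology (C ++ filter (fun x => x != negl l) E)) /\
  ~ (l.1 \in B /\ l.2 = true).
End CNF.

(* Any model [a] of [G] can be repaired into a model of [G] and [C \/ l] that
   is no more expensive: if [a] satisfies [C] nothing is to be done; otherwise
   set [l] to true.  This only spends cost if [l] is a positive blocking
   literal, and every clause [D \/ ~l] of [G] stays satisfied because its
   resolvent [C \/ D] with [C \/ l] is a tautology, so with [C] false under
   [a] some literal of [D] must be true. *)

From mathcomp Require Import all_boot all_order.
Import Order.TTheory.

Set Implicit Arguments. Unset Strict Implicit. Unset Printing Implicit Defensive.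

Section Cost.
Variables (V : finType) (B : {set V}).

Variant cost_spec (G : cnf V) : option nat -> Prop :=
  | CostSome a0 of sat a0 G & (forall a, sat a G -> cost_asg B a0 <= cost_asg B a) :
      cost_spec G (Some (cost_asg B a0))
  | CostNone of (forall a, ~~ sat a G) : cost_spec G None.

Lemma costP (G : cnf V) : cost_spec G (cost B G).
Proof.
rewrite /cost; case: pickP => [a0 Ha0 | unsat]; last first.
  by apply: CostNone => a; rewrite unsat.
have [a Ha amin] := @arg_minnP _ a0 (fun a => sat a G) (cost_asg B) Ha0.
suff -> : \big[minn/cost_asg B a0]_(a' | sat a' G) cost_asg B a' = cost_asg B a.
  exact: CostSome.
apply/eqP; rewrite eqn_leq; apply/andP; split.
  exact: (@bigmin_le_cond _ nat _ _ _ _ (cost_asg B) Ha).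
apply: (big_ind (leq (cost_asg B a))) => [|x y le_x le_y|a' Ha']; last exact: amin.
  exact: amin.
by rewrite leq_min le_x.
Qed.

Lemma cost_eq_of_dominated (G G' : cnf V) :
  (forall a, sat a G' -> sat a G) ->
  (forall a, sat a G -> exists2 a', sat a' G' & cost_asg B a' <= cost_asg B a) ->
  cost B G = cost B G'.
Proof.
move=> satG' dom; case: costP => [a Ha amin | unsatG]; case: costP => [a' Ha' amin' | unsatG'].
- congr Some; apply/eqP; rewrite eqn_leq amin ?satG' //.
  by have [a2 Ha2 le_a2a] := dom a Ha; apply: leq_trans (amin' _ Ha2) le_a2a.
- by have [a2 Ha2 _] := dom a Ha; move: (unsatG' a2); rewrite Ha2.
- by move: (unsatG a'); rewrite satG'.
- by [].
Qed.

End Cost.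

Section SetLiteral.
Variable V : finType.
Implicit Types (a : assignment V) (l x : lit V) (c : clause V).

Definition set_lit a l : assignment V :=
  [ffun v => if v == l.1 then l.2 else a v].

Lemma lit_val_negl a x : lit_val a (negl x) = ~~ lit_val a x.
Proof. by case: x => v [] /=; rewrite /lit_val /=; case: (a v). Qed.

Lemma tautology_sat a c : tautology c -> sat_clause a c.
Proof.
case/hasP=> x xc nxc; apply/hasP.
by case ax: (lit_val a x); [exists x | exists (negl x)]; rewrite ?lit_val_negl ?ax.
Qed.

Lemma lit_val_set_lit a l : lit_val (set_lit a l) l.
Proof. by rewrite /lit_val ffunE eqxx. Qed.

Lemma sat_clause_set_lit a l c :
  has (lit_val a) (filter (fun y => y != negl l) c) -> sat_clause (set_lit a l) c.
Proof.
case/hasP=> -[v b]; rewrite mem_filter => /andP[ne_y_nl yc] ay; apply/hasP.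
exists (v, b) => //; move: ne_y_nl ay; rewrite /lit_val ffunE /negl /=.
case: (v =P l.1) => [-> | //]; rewrite xpair_eqE eqxx /=.
by case: (l.2); case: b {yc}.
Qed.

Lemma cost_asg_set_lit (B : {set V}) a l :
  ~ (l.1 \in B /\ l.2 = true) -> cost_asg B (set_lit a l) <= cost_asg B a.
Proof.
move=> not_pos_blocking; apply: leq_sum => b bB; rewrite ffunE.
case: eqP => [eq_b | //]; rewrite -eq_b in not_pos_blocking.
by case: (l.2) not_pos_blocking => // - [].
Qed.

Lemma sat_set_lit_of_resolvents (G : cnf V) c l a :
  (forall E, E \in G -> negl l \in E ->
     tautology (c ++ filter (fun x => x != negl l) E)) ->
  sat a G -> ~~ sat_clause a c -> sat (set_lit a l) ((l :: c) :: G).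
Proof.
move=> resolvents satG unsat_c; rewrite /sat /= /sat_clause /= lit_val_set_lit /=.
apply/allP=> E EG; apply: sat_clause_set_lit.
have [nlE | nlNE] := boolP (negl l \in E).
  move: (tautology_sat a (resolvents E EG nlE)) unsat_c.
  by rewrite /sat_clause has_cat => /orP[->|].
rewrite (eq_in_filter (a2 := predT)) ?filter_predT; first exact: (allP satG).
by move=> y yE; apply: contraNneq nlNE => <-.
Qed.

End SetLiteral.

Theorem proposition3p5 (V : finType) (B : {set V}) (G : cnf V) (C : clause V)
    (l : lit V) :
  cost_BC B G C l -> cost B G = cost B ((l :: C) :: G).
Proof.
move=> [resolvents not_pos_blocking].
apply: cost_eq_of_dominated => [a /andP[] // | a satG].
have [satC | unsatC] := boolP (sat_clause a C).
  by exists a => //; apply/andP; split=> //; apply/orP; right.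
exists (set_lit a l); first exact: sat_set_lit_of_resolvents.
exact: cost_asg_set_lit.
Qed.
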